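(* Let $n\ge 1$, let $x^*\in\{0,1\}^n$, and let $\mathcal{D}$ be a finite nonempty background dataset of pairs $(x,y)$ with $x\in\{0,1\}^n$. Fix $f\in\{0,1\}^n$ and let $\Psi_f(x)=(-1)^{\langle f,x\rangle}$. Then for every $i\in[n]$, the SHAP value of $\Psi_f$ at $x^*$ with respect to $\mathcal{D}$ is $$\phi_i^{\Psi_f} \;=\; -\frac{2f_i}{|\mathcal{D}|}\sum_{(x,y)\in\mathcal{D}} \mathbb{1}_{x_i\neq x^*_i}\,(-1)^{\langle f,x\rangle}\,\frac{(|A|+1)\bmod 2}{|A|+1},$$ where $A=A(x)\triangleq\{j\in[n]\;:\; x_j\neq x^*_j,\ j\neq i,\ f_j=1\}$.
   Context: $[n]=\{1,\dots,n\}$ is the set of features and $\langle f,x\rangle=\sum_j f_jx_j$. For $S\subseteq[n]$ and $x,x^*\in\{0,1\}^n$, $x^*_S\oplus x_{[n]\setminus S}$ (also written $(x^*_S,x_{[n]\setminus S})$) denotes the vector $z\in\{0,1\}^n$ with $z_j=x^*_j$ for $j\in S$ and $z_j=x_j$ for $j\notin S$. For a function $h:\{0,1\}^n\to\mathbb{R}$, the value function is $v_h(S)=\frac{1}{|\mathcal{D}|}\sum_{(x,y)\in\mathcal{D}} h(x^*_S\oplus x_{[n]\setminus S})$ (sum over the dataset counted with multiplicity), and the SHAP value of feature $i$ is $\phi_i^h=\sum_{S\subseteq[n]\setminus\{i\}}\frac{|S|!\,(n-|S|-1)!}{n!}\bigl(v_h(S\cup\{i\})-v_h(S)\bigr)$.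 $\mathbb{1}_{x_i\neq x^*_i}$ is $1$ if $x_i\neq x^*_i$ and $0$ otherwise. *)

From HB Require Import structures.
From mathcomp Require Import all_boot all_order all_algebra.
Set Implicit Arguments. Unset Strict Implicit. Unset Printing Implicit Defensive.
Import Order.TTheory GRing.Theory Num.Theory.
Local Open Scope ring_scope.

Notation bvec n := {ffun 'I_n -> bool}.

Definition ip n (f x : bvec n) : nat := (\sum_(j < n) (f j && x j : nat))%N.

Definition mix n (xs : bvec n) (S : {set 'I_n}) (x : bvec n) : bvec n :=
  [ffun j => if j \in S then xs j else x j].

Definition vfun (R : fieldType) n (Y : Type) (h : bvec n -> R) (xs : bvec n)
    (D : seq (bvec n * Y)) (S : {set 'I_n}) : R :=
  (size D)%:R^-1 * \sum_(p <- D) h (mix xs S p.1).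

Definition shap (R : fieldType) n (Y : Type) (h : bvec n -> R) (xs : bvec n)
    (D : seq (bvec n * Y)) (i : 'I_n) : R :=
  \sum_(S : {set 'I_n} | i \notin S)
     ((#|S|`! * (n - #|S| - 1)`!)%:R / (n`!)%:R) *
     (vfun h xs D (i |: S) - vfun h xs D S).

Definition Psi (R : fieldType) n (f : bvec n) (x : bvec n) : R := (-1) ^+ ip f x.

Definition Aset n (f xs x : bvec n) (i : 'I_n) : {set 'I_n} :=
  [set j | (x j != xs j) && (j != i) && f j].

From HB Require Import structures.
From mathcomp Require Import all_boot all_order all_algebra.
From mathcomp Require Import zify ring.
Set Implicit Arguments. Unset Strict Implicit. Unset Printing Implicit Defensive.
Import Order.TTheory GRing.Theory Num.Theory.
Local Open Scope ring_scope.

(* Flipping the coordinates of a set T from x to x* multiplies Psi_f(x) by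
   (-1)^|T ∩ C|, where C is the set of active coordinates (f_j = 1) on which x
   and x* differ.  Hence the marginal contribution of i vanishes unless i ∈ C,
   in which case it is -2 Psi_f(x) (-1)^|S ∩ A|.  Only |S ∩ A| matters, so
   summing the Shapley weights over the coordinates outside A ∪ {i} yields the
   Shapley weights of a game with |A| + 1 players, and
     \sum_k C(a,k) (-1)^k k! (a-k)! / (a+1)! = \sum_(k <= a) (-1)^k / (a+1)
   is (a+1 mod 2) / (a+1). *)

Section SubsetSums.
Variables (T : finType) (V : pzSemiRingType).

Lemma sum_subset_card (A : {set T}) (G : nat -> V) :
  \sum_(S : {set T} | S \subset A) G #|S| =
  \sum_(k < #|A|.+1) 'C(#|A|, k)%:R * G k.
Proof.
rewrite (partition_big (fun S : {set T} => inord #|S| : 'I_#|A|.+1) predT) //=.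
apply: eq_bigr => k _.
rewrite -[in RHS](cards_draws A k) -[in RHS]sum1_card natr_sum mulr_suml.
rewrite big_mkcond [RHS]big_mkcond; apply: eq_bigr => S _; rewrite inE.
have [SA /=|//] := boolP (S \subset A).
have SAle : (#|S| <= #|A|)%N by apply: subset_leq_card.
have -> : (inord #|S| == k) = (#|S| == k).
  by rewrite -(inj_eq val_inj) /= inordK.
by have [<-|] := eqVneq #|S| k; rewrite ?mul1r.
Qed.

Lemma sum_subset_setU (A B : {set T}) (F : nat -> nat -> V) :
  [disjoint A & B] ->
  \sum_(S : {set T} | S \subset A :|: B) F #|S :&: A| #|S :&: B| =
  \sum_(S1 : {set T} | S1 \subset A) \sum_(S2 : {set T} | S2 \subset B)
    F #|S1| #|S2|.
Proof.
move=> dAB; rewrite pair_big /=.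
rewrite (reindex_onto (fun P : {set T} * {set T} => P.1 :|: P.2)
                      (fun S => (S :&: A, S :&: B))) /=; last first.
  by move=> S SAB; rewrite -setIUr; apply/setIidPl.
have meet_disjoint (C D S1 S2 : {set T}) : [disjoint D & C] ->
    S1 \subset C -> S2 \subset D -> (S1 :|: S2) :&: C = S1.
  move=> dDC S1C S2D; rewrite setIUl (setIidPl S1C).
  suff -> : S2 :&: C = set0 by rewrite setU0.
  by apply/setP => x; rewrite !inE; case: (boolP (x \in S2)) => // /(subsetP S2D)
    /(disjointFr dDC) ->.
apply: eq_big => [[S1 S2]|[S1 S2] /andP[_ /eqP [-> ->]]] //=.
apply/andP/andP => [[_ /eqP [<- <-]]|[S1A S2B]]; first by rewrite !subsetIr.
split; first exact: setUSS.
have dBA : [disjoint B & A] by rewrite disjoint_sym.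
by rewrite (meet_disjoint A B) // setUC (meet_disjoint B A).
Qed.

End SubsetSums.

Lemma sum_binomial_pascal (V : pzSemiRingType) (b : nat) (g : nat -> V) :
  \sum_(l < b.+2) 'C(b.+1, l)%:R * g l =
  \sum_(l < b.+1) 'C(b, l)%:R * (g l + g l.+1).
Proof.
rewrite big_ord_recl /= bin0.
under eq_bigr => l _ do rewrite /bump /= binS natrD mulrDl.
under [RHS]eq_bigr => l _ do rewrite mulrDr.
rewrite !big_split /= addrA; congr (_ + _).
rewrite [RHS]big_ord_recl big_ord_recr /= bin0 bin_small // mul0r addr0.
by congr (_ + _); apply: eq_bigr.
Qed.

Lemma sum_sign_ord (V : pzRingType) (m : nat) :
  \sum_(k < m) (-1) ^+ k = (m %% 2)%:R :> V.
Proof.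
elim: m => [|m IH]; first by rewrite big_ord0.
rewrite big_ord_recr /= IH !modn2 -signr_odd /=.
by case: (odd m); rewrite ?expr0 ?expr1 ?add0r ?subrr.
Qed.

Section ShapleyWeight.
Variable R : numFieldType.

Definition shapley_weight (m s : nat) : R := (s`! * (m - s)`!)%:R / (m.+1)`!%:R.

Lemma shapley_weightS m s : (s <= m)%N ->
  shapley_weight m.+1 s + shapley_weight m.+1 s.+1 = shapley_weight m s.
Proof.
move=> /subnKC <-; set d := (m - s)%N.
rewrite /shapley_weight -mulrDl -natrD subSS addKn.
have -> : ((s + d).+1 - s = d.+1)%N by lia.
have -> : (s`! * d.+1`! + s.+1`! * d`! = s`! * d`! * (s + d).+2)%N.
  by rewrite !factS; nia.
rewrite [(s + d).+2`!]factS !natrM invfM mulrA mulfK //.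
by rewrite pnatr_eq0.
Qed.

(* Summing over the coalitions of b extra players marginalises the Shapley
   weights of a game with a + b + 1 players to those of a game with a + 1. *)
Lemma sum_shapley_weight_addn a b k : (k <= a)%N ->
  \sum_(l < b.+1) 'C(b, l)%:R * shapley_weight (a + b) (k + l) =
  shapley_weight a k.
Proof.
move=> le_ka; elim: b => [|b IH]; first by rewrite big_ord1 bin0 mul1r !addn0.
rewrite (@sum_binomial_pascal _ b (fun l => shapley_weight (a + b.+1) (k + l))).
rewrite -IH; apply: eq_bigr => l _.
by rewrite !addnS shapley_weightS //; have := ltn_ord l; lia.
Qed.

Lemma sum_binomial_sign_shapley_weight a :
  \sum_(k < a.+1) 'C(a, k)%:R * (-1) ^+ k * shapley_weight a k =
  (a.+1 %% 2)%:R / a.+1%:R.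
Proof.
rewrite -sum_sign_ord mulr_suml; apply: eq_bigr => k _.
have le_ka : (k <= a)%N by rewrite -ltnS.
rewrite /shapley_weight factS natrM -(bin_fact le_ka) !natrM.
have nz_bin : 'C(a, k)%:R != 0 :> R by rewrite pnatr_eq0 -lt0n bin_gt0.
have nz_fact j : j`!%:R != 0 :> R by rewrite pnatr_eq0 -lt0n fact_gt0.
by field; rewrite addrC natr1 pnatr_eq0 nz_bin !nz_fact.
Qed.

Lemma sum_shapley_sign_setI n (i : 'I_n) (A : {set 'I_n}) : i \notin A ->
  \sum_(S : {set 'I_n} | i \notin S)
     ((#|S|`! * (n - #|S| - 1)`!)%:R / (n`!)%:R) * (-1) ^+ #|S :&: A| =
  ((#|A| + 1) %% 2)%:R / (#|A| + 1)%:R :> R.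
Proof.
move=> iNA; set B := ~: (i |: A).
have dAB : [disjoint A & B] by rewrite disjoints_subset /B setCK subsetUr.
have notin_sub (S : {set 'I_n}) : (i \notin S) = (S \subset A :|: B).
  apply/idP/subsetP => [iNS x xS|sub].
    by rewrite !inE; case: (x \in A); rewrite ?orbF //=; apply: contraNneq iNS => <-.
  by apply/negP => /sub; rewrite !inE eqxx (negbTE iNA).
have card_n : (#|A| + #|B|).+1 = n.
  by have := cardsC (i |: A); rewrite cardsU1 iNA card_ord add1n addSn.
pose F k l : R := shapley_weight (#|A| + #|B|) (k + l) * (-1) ^+ k.
transitivity (\sum_(S : {set 'I_n} | S \subset A :|: B) F #|S :&: A| #|S :&: B|).
  apply: eq_big => [S|S iNS]; first exact: notin_sub.
  have -> : #|S| = (#|S :&: A| + #|S :&: B|)%N.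
    rewrite -(cardsID A S); congr (_ + _)%N; apply: eq_card => x; rewrite !inE.
    case: (x \in A); rewrite /= ?orbT ?andbF ?orbF //.
    by have [->|] := eqVneq x i; rewrite ?(negbTE iNS) ?andbT.
  rewrite /F /shapley_weight card_n; congr (_ / _ * _); congr (_ * _`!)%:R.
  lia.
rewrite sum_subset_setU //.
under eq_bigr => S1 _ do rewrite (sum_subset_card B (F #|S1|)).
rewrite (sum_subset_card A (fun k => \sum_(l < #|B|.+1) 'C(#|B|, l)%:R * F k l)).
rewrite addn1 -sum_binomial_sign_shapley_weight.
apply: eq_bigr => k _; rewrite -mulrA; congr (_ * _).
rewrite /F; under eq_bigr => l _ do rewrite mulrA.
by rewrite -mulr_suml sum_shapley_weight_addn 1?mulrC // -ltnS.
Qed.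

End ShapleyWeight.

Section Parity.
Variables (R : fieldType) (n : nat) (f xs : bvec n).

Definition active_diff (x : bvec n) : {set 'I_n} := [set j | f j && (x j != xs j)].

Lemma Psi_mix (T : {set 'I_n}) (x : bvec n) :
  Psi R f (mix xs T x) = Psi R f x * (-1) ^+ #|T :&: active_diff x|.
Proof.
rewrite /Psi /ip !expr_sum -prodr_const [\prod_(j in _) _]big_mkcond -big_split /=.
apply: eq_bigr => j _; rewrite /mix ffunE !inE.
by case: (j \in T); case: (f j); case: (x j); case: (xs j);
  rewrite /= ?expr0 ?expr1; ring.
Qed.

Lemma Psi_mix_setU1B (i : 'I_n) (S : {set 'I_n}) (x : bvec n) : i \notin S ->
  Psi R f (mix xs (i |: S) x) - Psi R f (mix xs S x) =
  - (2 * f i)%N%:R * (x i != xs i)%:R * Psi R f x *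
    (-1) ^+ #|S :&: Aset f xs x i|.
Proof.
move=> iNS; rewrite !Psi_mix.
have SC_SA : S :&: active_diff x = S :&: Aset f xs x i.
  apply/setP => j; rewrite !inE; case: (boolP (j \in S)) => //= jS.
  have -> : j != i by apply: contraNneq iNS => <-.
  by rewrite andbT andbC.
case Ci: (f i && (x i != xs i)).
- have -> : (i |: S) :&: active_diff x = i |: (S :&: active_diff x).
    by apply/setP => j; rewrite !inE; have [->|] := eqVneq j i; rewrite ?Ci.
  rewrite cardsU1 !inE (negbTE iNS) SC_SA exprS /=.
  by move/andP: Ci => [-> ->]; rewrite muln1 mulr1; ring.
- have -> : (i |: S) :&: active_diff x = S :&: active_diff x.
    apply/setP => j; rewrite !inE.
    by have [->|] := eqVneq j i; rewrite ?Ci ?(negbTE iNS) ?andbF.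
  rewrite subrr; move: Ci.
  by case: (f i); case: (x i != xs i) => //= _; rewrite ?muln0 ?mulr0 ?oppr0 ?mul0r.
Qed.

End Parity.

Theorem lemma1 (R : realFieldType) (n : nat) (Y : Type) (xs : bvec n)
    (D : seq (bvec n * Y)) (f : bvec n) (i : 'I_n) :
  (0 < n)%N -> (0 < size D)%N ->
  shap (Psi R f) xs D i =
    - ((2 * f i)%N%:R / (size D)%:R) *
      \sum_(p <- D)
        ((p.1 i != xs i)%:R * Psi R f p.1 *
         (((#|Aset f xs p.1 i| + 1) %% 2)%:R / (#|Aset f xs p.1 i| + 1)%:R)).
Proof.
move=> _ _; rewrite /shap /vfun.
pose c (x : bvec n) : R :=
  (size D)%:R^-1 * (- (2 * f i)%N%:R * (x i != xs i)%:R * Psi R f x).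
transitivity (\sum_(p <- D) \sum_(S : {set 'I_n} | i \notin S)
  ((#|S|`! * (n - #|S| - 1)`!)%:R / (n`!)%:R) *
    (c p.1 * (-1) ^+ #|S :&: Aset f xs p.1 i|)).
  rewrite exchange_big /=; apply: eq_bigr => S iNS.
  rewrite -mulrBr -sumrB !mulr_sumr; apply: eq_bigr => p _.
  by rewrite Psi_mix_setU1B //; congr (_ * _); rewrite mulrA.
rewrite mulr_sumr; apply: eq_bigr => p _.
under eq_bigr => S _ do rewrite mulrCA.
have iNA : i \notin Aset f xs p.1 i by rewrite !inE eqxx andbF.
by rewrite -mulr_sumr sum_shapley_sign_setI // /c; ring.
Qed.
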